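(* Let $k\ge 4$ and let $w$ be a minimal uncompletable word for $S_k$. Then $u=ba^{k-1}$ is a prefix of $w$ and $v=b^{k-1}a$ is a suffix of $w$.
   Context: $\Sigma=\{a,b\}$. $S_k=\left(\Sigma^k\setminus\{ba^{k-1},b^{k-1}a\}\right)\cup\left(\Sigma^{k-1}\setminus\{a^{k-1},b^{k-1}\}\right)$. $\mathit{Fact}(S^* )$ is the set of all factors of words in $S^*$. A word $w\in\Sigma^*\setminus\mathit{Fact}(S_k^* )$ is uncompletable for $S_k$; a minimal uncompletable word is an uncompletable word of minimal possible length (such words exist for $k\ge 4$ since $S_k$ is then not complete). *)

From HB Require Import structures.
From mathcomp Require Import all_boot.
Set Implicit Arguments. Unset Strict Implicit. Unset Printing Implicit Defensive.

Inductive letter := la | lb.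

Definition letter_eqb (x y : letter) : bool :=
  match x, y with la, la => true | lb, lb => true | _, _ => false end.
Lemma letter_eqP : Equality.axiom letter_eqb.
Proof. by case; case; constructor. Qed.
HB.instance Definition _ := hasDecEq.Build letter letter_eqP.

Definition word := seq letter.

Definition inS (k : nat) (x : word) : bool :=
  ((size x == k) && (x != lb :: nseq k.-1 la) && (x != rcons (nseq k.-1 lb) la))
  || ((size x == k.-1) && (x != nseq k.-1 la) && (x != nseq k.-1 lb)).

Definition in_star (k : nat) (x : word) : Prop :=
  exists ws : seq word, all (inS k) ws /\ x = flatten ws.

Definition in_fact_star (k : nat) (w : word) : Prop :=
  exists p q : word, in_star k (p ++ w ++ q).

Definition uncompletable (k : nat) (w : word) : Prop := ~ in_fact_star k w.

Definition minimal_uncompletable (k : nat) (w : word) : Prop :=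
  uncompletable k w /\ forall w' : word, uncompletable k w' -> size w <= size w'.

(* A word is a factor of a word of S_k^* iff it can be written s0 x s1 with
   x in S_k^* and |s0|, |s1| < k: pad s0 on the left with a's and s1 on the
   right with b's to get two words of length k in S_k.  If w is a minimal
   uncompletable word, its tail is a factor, so w = c s0 x s1 with |c s0| = k
   and c s0 not in S_k; hence c s0 is b a^(k-1) or b^(k-1) a.  In the second
   case s0 = b^(k-2) a lies in S_k, and w = b (s0 x) s1 would be a factor.
   The suffix claim follows by the symmetry "reverse and swap letters",
   which preserves S_k and exchanges b a^(k-1) with b^(k-1) a. *)

From mathcomp Require Import all_boot.
From Stdlib Require Import Classical_Prop.

Set Implicit Arguments.
Unset Strict Implicit.

Lemma cat_eq_cat (T : Type) (s1 s2 t1 t2 : seq T) :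
  s1 ++ s2 = t1 ++ t2 -> exists m,
  (s1 = t1 ++ m /\ t2 = m ++ s2) \/ (t1 = s1 ++ m /\ s2 = m ++ t2).
Proof.
elim: s1 t1 => [|x s1 IH] [|y t1] /= e.
- by exists [::]; left.
- by exists (y :: t1); right.
- by exists (x :: s1); left.
- by case: e => -> /IH [m [[-> ->]|[-> ->]]]; exists m; [left|right].
Qed.

Lemma last_nseq (T : Type) (x : T) n : last x (nseq n x) = x.
Proof. by elim: n. Qed.

Lemma size_inS k x : inS k x -> size x <= k.
Proof.
by case/orP => /andP[/andP[/eqP-> _] _] //; apply: leq_pred.
Qed.

Lemma inS_full k x : size x = k.+1 ->
  inS k.+1 x = (x != lb :: nseq k la) && (x != rcons (nseq k lb) la).
Proof. by move=> hx; rewrite /inS hx eqxx (gtn_eqF (ltnSn k)) orbF andTb. Qed.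

Lemma in_star0 k : in_star k [::].
Proof. by exists [::]. Qed.

Lemma in_star1 k x : inS k x -> in_star k x.
Proof. by move=> hx; exists [:: x]; rewrite /= hx cats0. Qed.

Lemma in_star_cat k x y : in_star k x -> in_star k y -> in_star k (x ++ y).
Proof.
move=> [xs [hxs ->]] [ys [hys ->]].
by exists (xs ++ ys); rewrite all_cat hxs hys flatten_cat.
Qed.

Lemma in_star_prefix k w q : 0 < k -> in_star k (w ++ q) ->
  exists x s, [/\ in_star k x, size s < k & w = x ++ s].
Proof.
move=> k_gt0 [ws [hws e]]; elim: ws hws w q e => [|y ws IH] /=.
  by move=> _ [|c w] q // _; exists [::], [::]; split; first exact: in_star0.
move=> /andP[hy hws] w q /cat_eq_cat [m [[-> e]|[ey _]]].
  have [x [s [hx hs ->]]] := IH hws _ _ (esym e).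
  by exists (y ++ x), s; rewrite catA; split=> //; apply: in_star_cat (in_star1 hy) hx.
case: m ey => [|c m] ey.
  by exists w, [::]; rewrite cats0; split=> //; apply: in_star1; rewrite -[w]cats0 -ey.
exists [::], w; split=> //; first exact: in_star0.
by apply: leq_trans (size_inS hy); rewrite ey size_cat addnS ltnS leq_addr.
Qed.

Definition flip (c : letter) : letter := if c is la then lb else la.

Definition dual (w : word) : word := rev (map flip w).

Lemma flipK : involutive flip.
Proof. by case. Qed.

Lemma dualK : involutive dual.
Proof. by move=> w; rewrite /dual map_rev revK (mapK flipK). Qed.

Lemma dual_inj : injective dual.
Proof. exact: can_inj dualK. Qed.

Lemma eq_dual x y : (dual x == y) = (x == dual y).
Proof. by rewrite -{1}(dualK y) (inj_eq dual_inj). Qed.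

Lemma size_dual w : size (dual w) = size w.
Proof. by rewrite size_rev size_map. Qed.

Lemma dual_cat s t : dual (s ++ t) = dual t ++ dual s.
Proof. by rewrite /dual map_cat rev_cat. Qed.

Lemma dual_flatten ws : dual (flatten ws) = flatten (rev (map dual ws)).
Proof. by elim: ws => //= x ws IH; rewrite dual_cat IH rev_cons flatten_rcons. Qed.

Lemma dual_nseq_a n : dual (nseq n la) = nseq n lb.
Proof. by rewrite /dual map_nseq rev_nseq. Qed.

Lemma dual_nseq_b n : dual (nseq n lb) = nseq n la.
Proof. by rewrite -dual_nseq_a dualK. Qed.

Lemma dual_cons_nseq n : dual (lb :: nseq n la) = rcons (nseq n lb) la.
Proof. by rewrite /dual map_cons map_nseq rev_cons rev_nseq. Qed.

Lemma dual_rcons_nseq n : dual (rcons (nseq n lb) la) = lb :: nseq n la.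
Proof. by rewrite -dual_cons_nseq dualK. Qed.

Lemma inS_dual k x : inS k (dual x) = inS k x.
Proof.
rewrite /inS size_dual !eq_dual dual_cons_nseq dual_rcons_nseq dual_nseq_a dual_nseq_b.
by rewrite andbAC [in X in _ || X]andbAC.
Qed.

Lemma in_star_dual k x : in_star k x -> in_star k (dual x).
Proof.
move=> [ws [hws ->]]; exists (rev (map dual ws)); split; last exact: dual_flatten.
by rewrite all_rev all_map (eq_all (inS_dual k)).
Qed.

Lemma in_fact_star_dual k w : in_fact_star k w -> in_fact_star k (dual w).
Proof.
move=> [p [q /in_star_dual]]; rewrite !dual_cat -catA => h.
by exists (dual q), (dual p).
Qed.

Lemma minimal_uncompletable_dual k w :
  minimal_uncompletable k w -> minimal_uncompletable k (dual w).
Proof.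
move=> [hu hmin]; split; last by move=> w' /hmin; rewrite size_dual.
by move/in_fact_star_dual; rewrite dualK.
Qed.

Lemma in_star_suffix k p w : 0 < k -> in_star k (p ++ w) ->
  exists s x, [/\ size s < k, in_star k x & w = s ++ x].
Proof.
move=> k_gt0 /in_star_dual; rewrite dual_cat => /(in_star_prefix k_gt0).
move=> [x [s [hx hs e]]]; exists (dual s), (dual x).
by rewrite size_dual -[w]dualK e dual_cat; split=> //; apply: in_star_dual.
Qed.

Definition star_sandwich k (w : word) : Prop :=
  exists s0 x s1, [/\ size s0 < k, size s1 < k, in_star k x & w = s0 ++ x ++ s1].

Lemma sandwich_of_fact k w : 0 < k -> in_fact_star k w -> star_sandwich k w.
Proof.
move=> k_gt0 [p [q]]; rewrite catA => /(in_star_prefix k_gt0) [x [s1 [hx hs1 e]]].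
have [m [[_ es1]|[ex ->]]] := cat_eq_cat e.
  exists [::], [::], w; split=> //; last exact: in_star0.
  by apply: leq_ltn_trans hs1; rewrite es1 size_cat leq_addl.
rewrite ex in hx; have [s0 [y [hs0 hy ->]]] := in_star_suffix k_gt0 hx.
by exists s0, y, s1; rewrite catA.
Qed.

Lemma fact_of_sandwich k w : 1 < k -> star_sandwich k w -> in_fact_star k w.
Proof.
case: k => [|[|k]] // _ [s0 [x [s1 [hs0 hs1 hx ->]]]].
have [i ei] : exists i, k.+2 - size s0 = i.+1 by exists (k.+1 - size s0); rewrite subSn.
have [j ej] : exists j, k.+2 - size s1 = j.+1 by exists (k.+1 - size s1); rewrite subSn.
have size_pad0 : size (nseq i.+1 la ++ s0) = k.+2.
  by rewrite size_cat size_nseq -ei subnK // ltnW.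
have size_pad1 : size (s1 ++ nseq j.+1 lb) = k.+2.
  by rewrite size_cat size_nseq -ej addnC subnK // ltnW.
exists (nseq i.+1 la), (nseq j.+1 lb).
rewrite !catA -catA; apply: in_star_cat; first apply: in_star_cat hx.
  by apply: in_star1; rewrite inS_full.
apply: in_star1; rewrite inS_full //; apply/andP.
by split; apply/negP => /eqP /(congr1 (last la));
  rewrite last_cat ?last_rcons /= !last_nseq.
Qed.

Lemma in_fact_starP k w : 1 < k -> in_fact_star k w <-> star_sandwich k w.
Proof.
move=> k_gt1; split; [exact/sandwich_of_fact/ltnW | exact: fact_of_sandwich].
Qed.

Lemma inS_rcons_nseq k : inS k.+3 (rcons (nseq k.+1 lb) la).
Proof.
have ne_b : rcons (nseq k.+1 lb) la != nseq k.+2 lb.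
  by apply/negP => /eqP /(congr1 (last la)); rewrite last_rcons /= last_nseq.
by rewrite /inS size_rcons size_nseq eqxx ne_b orbC.
Qed.

Lemma minimal_uncompletable_prefix k w : 2 < k -> minimal_uncompletable k w ->
  prefix (lb :: nseq k.-1 la) w.
Proof.
case: k => [|[|[|k]]] // _ [hu hmin] /=.
have factP := @in_fact_starP k.+3 _ isT.
have {hu} not_sandwich : ~ star_sandwich k.+3 w by move/factP.
case: w hmin not_sandwich => [|c w] hmin not_sandwich.
  by case: not_sandwich; exists [::], [::], [::]; split=> //; apply: in_star0.
have /factP [s0 [x [s1 [hs0 hs1 hx ew]]]] : in_fact_star k.+3 w.
  by apply: NNPP => /hmin; rewrite ltnn.
have size_cs0 : size (c :: s0) = k.+3.
  apply/eqP; rewrite eqn_leq hs0 leqNgt; apply/negP => hlt.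
  by case: not_sandwich; exists (c :: s0), x, s1; rewrite ew.
have : ~~ inS k.+3 (c :: s0).
  apply/negP => hin; case: not_sandwich; exists [::], ((c :: s0) ++ x), s1.
  by rewrite ew catA; split=> //; apply: in_star_cat (in_star1 hin) hx.
rewrite inS_full // negb_and !negbK => /orP[/eqP eu|/eqP [ec es0]].
  by rewrite ew -cat_cons eu prefix_prefix.
case: not_sandwich; exists [:: lb], (s0 ++ x), s1; rewrite ew ec catA.
by split=> //; apply: in_star_cat hx; rewrite es0; apply: in_star1 (inS_rcons_nseq k).
Qed.

Theorem theorem2 (k : nat) (w : word) :
  4 <= k -> minimal_uncompletable k w ->
  prefix (lb :: nseq k.-1 la) w /\ suffix (rcons (nseq k.-1 lb) la) w.
Proof.
move=> /ltnW k_gt2 hw; split; first exact: minimal_uncompletable_prefix hw.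
have /prefixP [r er] :=
  minimal_uncompletable_prefix k_gt2 (minimal_uncompletable_dual hw).
by rewrite -[w]dualK er dual_cat dual_cons_nseq suffix_suffix.
Qed.
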